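(* Let $P_0,P_1,P_2\in\mathbb H$ be three points not lying on a common geodesic, labelled so that $\chi:=\langle P_0\tilde\times P_1,P_2\rangle>0$, and let $\varepsilon\in\{-1,1\}$. For $i\in\mathbb Z/3\mathbb Z$ let $$R_i:=\frac{\sqrt{1-2\langle P_{i+1},P_{i+2}\rangle}\,(P_{i+1}+P_{i+2})+\varepsilon\, P_{i+1}\tilde\times P_{i+2}}{\sqrt3\,\bigl(1-\langle P_{i+1},P_{i+2}\rangle\bigr)}\in\mathbb H$$ (the centroid of the equilateral triangle $P_{i+1}P_{i+2}Q_i$ with $Q_i=\frac{-\langle P_{i+1},P_{i+2}\rangle(P_{i+1}+P_{i+2})+\varepsilon\sqrt{1-2\langle P_{i+1},P_{i+2}\rangle}\,P_{i+1}\tilde\times P_{i+2}}{1-\langle P_{i+1},P_{i+2}\rangle}$), so that $R_0R_1R_2$ is the Napoleonization of $P_0P_1P_2$. If the triangle $R_0R_1R_2$ is equilateral, i.e. $\langle R_0,R_1\rangle=\langle R_1,R_2\rangle=\langle R_2,R_0\rangle$, then $P_0P_1P_2$ is equilateral, i.e. $\langle P_0,P_1\rangle=\langle P_1,P_2\rangle=\langle P_2,P_0\rangle$.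
   Context: On $\mathbb R^3$ the Minkowski form is $\langle v,w\rangle=-v_1w_1+v_2w_2+v_3w_3$. The hyperbolic plane is the upper sheet $\mathbb H=\{P\in\mathbb R^3:\langle P,P\rangle=-1,\ P_1\ge 1\}$, with distance $\operatorname{arccosh}(-\langle P,Q\rangle)$. The hyperbolic cross product is $v\tilde\times w:=J(v\times w)$, where $\times$ is the Euclidean cross product and $J=\mathrm{diag}(-1,1,1)$. The centroid of a triangle with vertices $A,B,C\in\mathbb H$ is $(A+B+C)/\sqrt{-\langle A+B+C,A+B+C\rangle}$. A triangle $ABC$ in $\mathbb H$ is equilateral if $\langle A,B\rangle=\langle B,C\rangle=\langle C,A\rangle$. The sign $\varepsilon$ is used for all three sides (equilateral triangles all erected on the same side). *)

From Stdlib Require Import Reals.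
Open Scope R_scope.

Record vec3 := V3 { c1 : R; c2 : R; c3 : R }.

Definition vadd (v w : vec3) : vec3 := V3 (c1 v + c1 w) (c2 v + c2 w) (c3 v + c3 w).
Definition vscale (a : R) (v : vec3) : vec3 := V3 (a * c1 v) (a * c2 v) (a * c3 v).

Definition mink (v w : vec3) : R := - c1 v * c1 w + c2 v * c2 w + c3 v * c3 w.

Definition ecross (v w : vec3) : vec3 :=
  V3 (c2 v * c3 w - c3 v * c2 w) (c3 v * c1 w - c1 v * c3 w) (c1 v * c2 w - c2 v * c1 w).

Definition Jmap (v : vec3) : vec3 := V3 (- c1 v) (c2 v) (c3 v).

Definition hcross (v w : vec3) : vec3 := Jmap (ecross v w).

Definition in_H (P : vec3) : Prop := mink P P = -1 /\ 1 <= c1 P.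

(* three points of H lie on a common geodesic iff they lie in a common
   plane through the origin, i.e. are linearly dependent in R^3 *)
Definition on_common_geodesic (A B C : vec3) : Prop :=
  exists a b c : R, (a <> 0 \/ b <> 0 \/ c <> 0) /\
    vadd (vscale a A) (vadd (vscale b B) (vscale c C)) = V3 0 0 0.

Definition napR (eps : R) (A B : vec3) : vec3 :=
  vscale (/ (sqrt 3 * (1 - mink A B)))
    (vadd (vscale (sqrt (1 - 2 * mink A B)) (vadd A B)) (vscale eps (hcross A B))).

Definition equilateral (A B C : vec3) : Prop :=
  mink A B = mink B C /\ mink B C = mink C A.

(** Put [u_i = sqrt (1 - 2 <P_(i+1), P_(i+2)>)], so that [u_i ^ 2 >= 3].  The
    inner products of the Napoleon vertices are rational functions of the
    [u_i] and of [chi], and after clearing denominators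
    [<R_0,R_1> - <R_1,R_2>] and [<R_1,R_2> - <R_2,R_0>] become
    [(u_2 - u_0) T] and [(u_0 - u_1) T] for one symmetric polynomial [T].  If
    [T <> 0] the [u_i] coincide.  If [T = 0], the vectors [(q, 2 eps chi)] and
    [(X, Y)] (with [q = sum u_i^2 - 1], [X = sum u_i u_j - 1]) are parallel,
    while the Gram relation for [chi ^ 2] makes them of equal length; hence
    [q = X], the equality case of [sum u_i^2 >= sum u_i u_j]. *)
From Stdlib Require Import Reals Lra Psatz.
Open Scope R_scope.

Lemma hcross_triple_cycle (u v w : vec3) :
  mink (hcross u v) w = mink (hcross v w) u.
Proof. destruct u, v, w; unfold mink, hcross, Jmap, ecross; simpl; ring. Qed.

(** Minus the Gram determinant of three points of [H] with pairwise inner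
    products [a, b, c] (the diagonal entries are [-1]). *)
Definition gram_det (a b c : R) : R := 1 - a ^ 2 - b ^ 2 - c ^ 2 - 2 * a * b * c.

Lemma mink_hcross_sqr (u v w : vec3) :
  mink u u = -1 -> mink v v = -1 -> mink w w = -1 ->
  (mink (hcross u v) w) ^ 2 = gram_det (mink u v) (mink v w) (mink w u).
Proof.
  intros Hu Hv Hw; unfold gram_det.
  transitivity (- (mink u u * mink v v * mink w w + 2 * mink u v * mink v w * mink w u
     - mink u u * mink v w ^ 2 - mink v v * mink w u ^ 2 - mink w w * mink u v ^ 2)).
  - destruct u, v, w; unfold mink, hcross, Jmap, ecross; simpl; ring.
  - rewrite Hu, Hv, Hw; ring.
Qed.

Lemma mink_in_H_le (P Q : vec3) : in_H P -> in_H Q -> mink P Q <= -1.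
Proof.
  destruct P as [x0 y0 z0], Q as [x1 y1 z1]; unfold in_H, mink; simpl.
  intros [H0 G0] [H1 G1].
  enough (1 + y0 * y1 + z0 * z1 <= x0 * x1) by lra.
  apply Rsqr_incr_0_var; [unfold Rsqr | nra].
  assert (Lagrange : (x0 * x1) ^ 2 - (1 + y0 * y1 + z0 * z1) ^ 2
                     = (y0 - y1) ^ 2 + (z0 - z1) ^ 2 + (y0 * z1 - z0 * y1) ^ 2).
  { replace ((x0 * x1) ^ 2) with ((x0 * x0) * (x1 * x1)) by ring.
    replace (x0 * x0) with (1 + y0 * y0 + z0 * z0) by lra.
    replace (x1 * x1) with (1 + y1 * y1 + z1 * z1) by lra. ring. }
  assert (0 <= (y0 - y1) ^ 2 + (z0 - z1) ^ 2 + (y0 * z1 - z0 * y1) ^ 2) by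
    (repeat apply Rplus_le_le_0_compat; apply pow2_ge_0).
  lra.
Qed.

Definition mink_of_root (u : R) : R := (1 - u ^ 2) / 2.

Definition side_root (A B : vec3) : R := sqrt (1 - 2 * mink A B).

Lemma mink_of_root_side_root (A B : vec3) :
  in_H A -> in_H B -> mink_of_root (side_root A B) = mink A B.
Proof.
  intros HA HB; pose proof (mink_in_H_le A B HA HB).
  unfold mink_of_root, side_root; rewrite pow2_sqrt by lra; field.
Qed.

Definition napoleon_dot (e chi ua ub uc : R) : R :=
  (ua * ub * (mink_of_root ua + mink_of_root ub + mink_of_root uc - 1)
   + e * (ua + ub) * chi - (mink_of_root ua * mink_of_root ub + mink_of_root uc))
  / (3 * (1 - mink_of_root ua) * (1 - mink_of_root ub)).

Lemma mink_napR_napR (e : R) (u v w : vec3) :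
  in_H u -> in_H v -> in_H w -> e * e = 1 ->
  mink (napR e u v) (napR e v w) =
  napoleon_dot e (mink (hcross u v) w) (side_root u v) (side_root v w) (side_root w u).
Proof.
  intros Hu Hv Hw He.
  pose proof (mink_in_H_le u v Hu Hv); pose proof (mink_in_H_le v w Hv Hw).
  unfold napoleon_dot; rewrite !mink_of_root_side_root by assumption.
  unfold napR, side_root.
  set (s1 := sqrt (1 - 2 * mink u v)); set (s2 := sqrt (1 - 2 * mink v w)).
  transitivity (/ (sqrt 3 * (1 - mink u v)) * / (sqrt 3 * (1 - mink v w)) *
    (s1 * s2 * (mink u v + mink v v + mink w u + mink v w)
     + e * (s1 + s2) * mink (hcross u v) w
     - e * e * (mink u v * mink v w - mink w u * mink v v))).
  - clearbody s1 s2; destruct u, v, w.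
    unfold mink, vscale, vadd, hcross, Jmap, ecross; simpl; ring.
  - assert (S3 : 3 = sqrt 3 * sqrt 3) by (rewrite sqrt_sqrt; lra).
    assert (sqrt 3 <> 0) by (apply Rgt_not_eq, sqrt_lt_R0; lra).
    set (r3 := sqrt 3) in *.
    rewrite He, (proj1 Hv), S3; field; repeat split; lra.
Qed.

Definition napoleon_discr (e chi ua ub uc : R) : R :=
  2 * e * chi * (ua * ub + ub * uc + uc * ua - 1)
  - (ua ^ 2 + ub ^ 2 + uc ^ 2 - 1) * (ua * ub * uc - ua - ub - uc).

Lemma napoleon_discr_cycle (e chi ua ub uc : R) :
  napoleon_discr e chi ub uc ua = napoleon_discr e chi ua ub uc.
Proof. unfold napoleon_discr; ring. Qed.

Lemma napoleon_dot_sub (e chi ua ub uc : R) :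
  (napoleon_dot e chi ua ub uc - napoleon_dot e chi ub uc ua)
  * (3 * (1 + ua ^ 2) * (1 + ub ^ 2) * (1 + uc ^ 2))
  = 2 * (uc - ua) * napoleon_discr e chi ua ub uc.
Proof.
  assert (0 <= ua ^ 2) by apply pow2_ge_0.
  assert (0 <= ub ^ 2) by apply pow2_ge_0.
  assert (0 <= uc ^ 2) by apply pow2_ge_0.
  unfold napoleon_dot, napoleon_discr, mink_of_root; field; repeat split; lra.
Qed.

Lemma napoleon_discr_eq0_roots_eq (e chi ua ub uc : R) :
  0 <= ua -> 0 <= ub -> 0 <= uc ->
  mink_of_root ua <= -1 -> mink_of_root ub <= -1 -> mink_of_root uc <= -1 ->
  e * e = 1 ->
  chi ^ 2 = gram_det (mink_of_root ua) (mink_of_root ub) (mink_of_root uc) ->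
  napoleon_discr e chi ua ub uc = 0 -> ua = ub /\ ub = uc.
Proof.
  intros Ha Hb Hc La Lb Lc He Hchi HT.
  unfold mink_of_root in La, Lb, Lc; unfold napoleon_discr in HT.
  set (q := ua ^ 2 + ub ^ 2 + uc ^ 2 - 1) in HT.
  set (X := ua * ub + ub * uc + uc * ua - 1) in HT.
  set (Y := ua * ub * uc - ua - ub - uc) in HT.
  assert (Hq : 0 < q) by (unfold q; lra).
  assert (1 <= ua) by nra. assert (1 <= ub) by nra. assert (1 <= uc) by nra.
  assert (HX : 0 < X) by (unfold X; nra).
  assert (Lengths : q ^ 2 + 4 * chi ^ 2 = X ^ 2 + Y ^ 2)
    by (rewrite Hchi; unfold q, X, Y, gram_det, mink_of_root; field).
  assert (Parallel : q ^ 2 * Y ^ 2 = 4 * chi ^ 2 * X ^ 2).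
  { assert (HqY : q * Y = 2 * e * chi * X) by lra.
    replace (q ^ 2 * Y ^ 2) with ((q * Y) ^ 2) by ring; rewrite HqY.
    transitivity (4 * (e * e) * chi ^ 2 * X ^ 2); [ring | rewrite He; ring]. }
  assert (HqX : q = X).
  { assert (Hprod : (q ^ 2 - X ^ 2) * (q ^ 2 + 4 * chi ^ 2) = 0).
    { transitivity (q ^ 2 * (q ^ 2 + 4 * chi ^ 2) - X ^ 2 * q ^ 2 - 4 * chi ^ 2 * X ^ 2);
        [ring | rewrite Lengths; lra]. }
    apply Rmult_integral in Hprod as [Hsq | Hpos]; [nra |].
    assert (0 <= chi ^ 2) by apply pow2_ge_0; nra. }
  assert (Sq : (ua - ub) ^ 2 + (ub - uc) ^ 2 + (uc - ua) ^ 2 = 2 * (q - X))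
    by (unfold q, X; ring).
  rewrite HqX in Sq.
  assert (0 <= (ua - ub) ^ 2) by apply pow2_ge_0.
  assert (0 <= (ub - uc) ^ 2) by apply pow2_ge_0.
  assert (0 <= (uc - ua) ^ 2) by apply pow2_ge_0.
  split; nra.
Qed.

Lemma napoleon_dot_equilateral (e chi ua ub uc : R) :
  0 <= ua -> 0 <= ub -> 0 <= uc ->
  mink_of_root ua <= -1 -> mink_of_root ub <= -1 -> mink_of_root uc <= -1 ->
  e * e = 1 ->
  chi ^ 2 = gram_det (mink_of_root ua) (mink_of_root ub) (mink_of_root uc) ->
  napoleon_dot e chi ua ub uc = napoleon_dot e chi ub uc ua ->
  napoleon_dot e chi ub uc ua = napoleon_dot e chi uc ua ub ->
  ua = ub /\ ub = uc.
Proof.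
  intros Ha Hb Hc La Lb Lc He Hchi E1 E2.
  destruct (Req_dec (napoleon_discr e chi ua ub uc) 0) as [HT | HT].
  - exact (napoleon_discr_eq0_roots_eq e chi ua ub uc Ha Hb Hc La Lb Lc He Hchi HT).
  - pose proof (napoleon_dot_sub e chi ua ub uc) as D1.
    pose proof (napoleon_dot_sub e chi ub uc ua) as D2.
    rewrite napoleon_discr_cycle, E2 in D2; rewrite E1 in D1.
    assert (Hca : (uc - ua) * napoleon_discr e chi ua ub uc = 0) by lra.
    assert (Hab : (ua - ub) * napoleon_discr e chi ua ub uc = 0) by lra.
    apply Rmult_integral in Hca as [Hca | Hca]; [| contradiction].
    apply Rmult_integral in Hab as [Hab | Hab]; [| contradiction].
    split; lra.
Qed.

Theorem theorem1p1 (P0 P1 P2 : vec3) (eps : R) :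
  in_H P0 -> in_H P1 -> in_H P2 ->
  ~ on_common_geodesic P0 P1 P2 ->
  mink (hcross P0 P1) P2 > 0 ->
  (eps = 1 \/ eps = -1) ->
  equilateral (napR eps P1 P2) (napR eps P2 P0) (napR eps P0 P1) ->
  equilateral P0 P1 P2.
Proof.
  intros H0 H1 H2 _ _ Heps [E01 E12].
  assert (Heps2 : eps * eps = 1) by (destruct Heps; subst; ring).
  rewrite !mink_napR_napR in E01, E12 by assumption.
  rewrite <- ?(hcross_triple_cycle P1 P2 P0), <- ?(hcross_triple_cycle P0 P1 P2) in E01, E12.
  destruct (napoleon_dot_equilateral eps (mink (hcross P0 P1) P2)
              (side_root P1 P2) (side_root P2 P0) (side_root P0 P1)) as [Eab Ebc];
    try apply sqrt_pos; try assumption.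
  1-3: rewrite mink_of_root_side_root by assumption; apply mink_in_H_le; assumption.
  - rewrite !mink_of_root_side_root, hcross_triple_cycle by assumption.
    apply mink_hcross_sqr; [apply H1 | apply H2 | apply H0].
  - unfold equilateral.
    rewrite <- (mink_of_root_side_root P0 P1), <- (mink_of_root_side_root P1 P2),
      <- (mink_of_root_side_root P2 P0), Eab, Ebc by assumption.
    split; reflexivity.
Qed.
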